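(* Let $\mathcal{S}=\{s_1,\dots,s_N\}$ be a finite state space, $\mathcal{A}$ a finite action space, $\gamma\in(0,1)$, and consider the real MDP $\langle\mathcal{S},\mathcal{A},\mathbb{P},R,\gamma\rangle$ and the DT MDP $\langle\mathcal{S},\mathcal{A},\mathbb{P}',R',\gamma\rangle$. Then $$\max_i\bar d(s_i,s_i)\le\frac{1}{1-\gamma}\max_i d_{\mathrm{TV}}(s_i,s_i).$$
   Context: $\mathbb{P}(\cdot|s,a),\mathbb{P}'(\cdot|s,a)$ are probability distributions on $\mathcal{S}$; $R,R':\mathcal{S}\times\mathcal{A}\to\mathbb{R}$; $R_{\max}=\max_{i,j,a}|R(s_i,a)-R'(s_j,a)|$. For distributions $P,Q$ on $\mathcal{S}$ and a cost $d:\mathcal{S}\times\mathcal{S}\to[0,\infty)$ (not required to vanish on the diagonal; first argument a real-MDP state, second a DT-MDP state), $W_1(P,Q;d)=\min_\Lambda\sum_{i,j}\lambda_{i,j}d(s_i,s_j)$ over nonnegative $N\times N$ matrices with row sums $P(s_i)$ and column sums $Q(s_j)$. Define $d_0\equiv0$, $d_n(s_i,s_j)=\max_a\{|R(s_i,a)-R'(s_j,a)|+\gamma W_1(\mathbb{P}(\cdot|s_i,a),\mathbb{P}'(\cdot|s_j,a);d_{n-1})\}$; the DT bisimulation metric $\bar d$ is the pointwise limit of the nondecreasing sequence $(d_n)$; it takes values in $[0,\frac{R_{\max}}{1-\gamma}]$ and satisfies $\bar d(s_i,s_j)=\max_a\{|R(s_i,a)-R'(s_j,a)|+\gamma W_1(\mathbb{P}(\cdot|s_i,a),\mathbb{P}'(\cdot|s_j,a);\bar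 d)\}$. With $\mathrm{TV}(P,Q)=\frac12\sum_i|P(s_i)-Q(s_i)|$, define $d_{\mathrm{TV}}(s_i,s_i)=\max_a\{|R(s_i,a)-R'(s_i,a)|+\frac{\gamma R_{\max}}{1-\gamma}\mathrm{TV}(\mathbb{P}(\cdot|s_i,a),\mathbb{P}'(\cdot|s_i,a))\}$. *)

From HB Require Import structures.
From mathcomp Require Import all_boot all_order all_algebra.
From mathcomp Require Import all_classical all_reals all_analysis.
Set Implicit Arguments. Unset Strict Implicit. Unset Printing Implicit Defensive.
Import Order.TTheory GRing.Theory Num.Theory numFieldNormedType.Exports.
Local Open Scope ring_scope.
Local Open Scope classical_set_scope.

Section DT.
Variables (R : realType) (S A : finType).

Definition is_distr (p : S -> R) : Prop :=
  (forall s, 0 <= p s) /\ \sum_(s : S) p s = 1.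

Definition coupling (P Q : S -> R) (L : S -> S -> R) : Prop :=
  [/\ forall i j, 0 <= L i j,
      forall i, \sum_(j : S) L i j = P i
    & forall j, \sum_(i : S) L i j = Q j].

(* W_1(P,Q;d) = min over couplings of sum_{i,j} L i j * d i j
   (the minimum is attained, so it equals this infimum) *)
Definition W1 (P Q : S -> R) (d : S -> S -> R) : R :=
  inf [set c | exists L, coupling P Q L /\
                 c = \sum_(i : S) \sum_(j : S) L i j * d i j].

Variables (Pr Pr' : S -> A -> S -> R) (Rw Rw' : S -> A -> R) (gamma : R).

Definition Rmax : R :=
  \big[Num.max/0]_(i : S) \big[Num.max/0]_(j : S) \big[Num.max/0]_(a : A)
     `|Rw i a - Rw' j a|.

Fixpoint dn (n : nat) : S -> S -> R :=
  match n with
  | 0%N => fun _ _ => 0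
  | n'.+1 => fun s t => \big[Num.max/0]_(a : A)
        (`|Rw s a - Rw' t a| + gamma * W1 (Pr s a) (Pr' t a) (dn n'))
  end.

Definition dbar (s t : S) : R := limn (fun n : nat => dn n s t).

Definition TV (P Q : S -> R) : R := 2^-1 * \sum_(i : S) `|P i - Q i|.

Definition dTV (s : S) : R :=
  \big[Num.max/0]_(a : A)
    (`|Rw s a - Rw' s a| + gamma * Rmax / (1 - gamma) * TV (Pr s a) (Pr' s a)).

End DT.

(* The maximal coupling of P and Q leaves the common mass min(P, Q), of total
   1 - TV(P, Q), on the diagonal and spreads the remaining mass TV(P, Q) off
   it.  Hence W_1(P, Q; d) <= (1 - TV) M + TV B whenever d <= M on the
   diagonal and d <= B everywhere.  Every d_n is bounded by
   B = R_max / (1 - gamma), the fixed point of x |-> R_max + gamma x, and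
   with M = max_i d_TV(s_i, s_i) / (1 - gamma), which satisfies
   M = max_i d_TV(s_i, s_i) + gamma M, the bound d_n(s, s) <= M propagates
   from d_n to d_(n+1).  It passes to the nondecreasing, bounded limit. *)

From HB Require Import structures.
From mathcomp Require Import all_boot all_order all_algebra.
From mathcomp Require Import all_classical all_reals all_analysis.
From mathcomp Require Import ring lra.
Set Implicit Arguments. Unset Strict Implicit.
Import Order.TTheory GRing.Theory Num.Theory.
Local Open Scope ring_scope.

Section MaximalCoupling.
Variables (R : realType) (S : finType).
Implicit Types (P Q : S -> R) (d L : S -> S -> R).

Definition overlap P Q i := Num.min (P i) (Q i).

(* When [TV P Q = 0] the second summand divides by zero, which is harmless:
   then [P = Q = overlap P Q]. *)
Definition maximal_coupling P Q i j :=
  (if i == j then overlap P Q i else 0)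
  + (P i - overlap P Q i) * (Q j - overlap P Q j) / TV P Q.

Definition transport_cost L d := \sum_i \sum_j L i j * d i j.

Lemma sum_if_eq (i : S) (x : R) : \sum_j (if i == j then x else 0) = x.
Proof. by rewrite -big_mkcond (big_pred1 i) // => j; rewrite eq_sym. Qed.

Lemma overlapC P Q i : overlap Q P i = overlap P Q i.
Proof. exact: minC. Qed.

Lemma TVC P Q : TV Q P = TV P Q.
Proof. by rewrite /TV; congr (_ * _); apply: eq_bigr => i _; rewrite distrC. Qed.

Lemma TV_ge0 P Q : 0 <= TV P Q.
Proof. by apply: mulr_ge0; [rewrite invr_ge0 | apply: sumr_ge0 => i _]. Qed.

Lemma overlap_ge0 P Q i : is_distr P -> is_distr Q -> 0 <= overlap P Q i.
Proof. by move=> [P0 _] [Q0 _]; rewrite le_min P0 Q0. Qed.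

Lemma sub_overlap_ge0 P Q i : 0 <= P i - overlap P Q i.
Proof. by rewrite subr_ge0 ge_min lexx. Qed.

Lemma overlap_mass_ge0 P Q i j :
  0 <= (P i - overlap P Q i) * (Q j - overlap P Q j) / TV P Q.
Proof.
apply: divr_ge0 (TV_ge0 _ _); rewrite -[overlap P Q j]overlapC.
by apply: mulr_ge0; apply: sub_overlap_ge0.
Qed.

Lemma sum_sub_overlap P Q : is_distr P -> is_distr Q ->
  \sum_k (P k - overlap P Q k) = TV P Q.
Proof.
move=> [_ P1] [_ Q1].
have half_gap k : P k - overlap P Q k = 2^-1 * ((P k - Q k) + `|P k - Q k|).
  rewrite /overlap; case: (leP (P k) (Q k)) => PQ.
  - by rewrite ler0_norm ?subr_le0 //; lra.
  - by rewrite gtr0_norm ?subr_gt0 //; lra.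
rewrite (eq_bigr _ (fun k _ => half_gap k)) -mulr_sumr big_split /=.
by rewrite sumrB P1 Q1 subrr add0r.
Qed.

Lemma sum_sub_overlap_r P Q : is_distr P -> is_distr Q ->
  \sum_k (Q k - overlap P Q k) = TV P Q.
Proof.
move=> hP hQ; rewrite -TVC -(sum_sub_overlap hQ hP).
by apply: eq_bigr => k _; rewrite overlapC.
Qed.

Lemma sum_overlap P Q : is_distr P -> is_distr Q ->
  \sum_k overlap P Q k = 1 - TV P Q.
Proof.
move=> hP hQ; rewrite -(sum_sub_overlap hP hQ) sumrB.
by case: hP => _ ->; rewrite opprB addrC subrK.
Qed.

Lemma sub_overlap_TVK P Q i : is_distr P -> is_distr Q ->
  (P i - overlap P Q i) * TV P Q / TV P Q = P i - overlap P Q i.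
Proof.
move=> hP hQ; have [TV0|TVn0] := eqVneq (TV P Q) 0; last by rewrite mulfK.
suff -> : P i - overlap P Q i = 0 by rewrite !mul0r.
have := sum_sub_overlap hP hQ; rewrite TV0.
by move/psumr_eq0P => -> // k _; apply: sub_overlap_ge0.
Qed.

Lemma maximal_couplingC P Q i j :
  maximal_coupling Q P j i = maximal_coupling P Q i j.
Proof.
rewrite /maximal_coupling (overlapC P) (overlapC P Q i) TVC eq_sym.
by rewrite [_ * (P i - _)]mulrC; case: eqP => // ->.
Qed.

Lemma maximal_coupling_ge0 P Q i j : is_distr P -> is_distr Q ->
  0 <= maximal_coupling P Q i j.
Proof.
move=> hP hQ; apply: addr_ge0; first by case: eqP => // _; apply: overlap_ge0.
exact: overlap_mass_ge0.
Qed.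

Lemma maximal_coupling_row P Q i : is_distr P -> is_distr Q ->
  \sum_j maximal_coupling P Q i j = P i.
Proof.
move=> hP hQ; rewrite big_split /= sum_if_eq -mulr_suml -mulr_sumr.
by rewrite sum_sub_overlap_r // sub_overlap_TVK // addrC subrK.
Qed.

Lemma coupling_maximal_coupling P Q : is_distr P -> is_distr Q ->
  coupling P Q (maximal_coupling P Q).
Proof.
move=> hP hQ; split=> [i j|i|j]; first exact: maximal_coupling_ge0.
  exact: maximal_coupling_row.
under eq_bigr => i _ do rewrite -maximal_couplingC.
exact: maximal_coupling_row.
Qed.

Lemma maximal_coupling_cost P Q d M B : is_distr P -> is_distr Q ->
  (forall i, d i i <= M) -> (forall i j, d i j <= B) ->
  transport_cost (maximal_coupling P Q) d <= (1 - TV P Q) * M + TV P Q * B.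
Proof.
move=> hP hQ dM dB.
apply: (@le_trans _ _ (\sum_i \sum_j ((if i == j then overlap P Q i * M else 0)
    + (P i - overlap P Q i) * (Q j - overlap P Q j) / TV P Q * B))).
  apply: ler_sum => i _; apply: ler_sum => j _; rewrite mulrDl.
  apply: lerD; last by apply: ler_wpM2l; [apply: overlap_mass_ge0 | apply: dB].
  case: eqP => [<-|_]; last by rewrite mul0r.
  by apply: ler_wpM2l; [apply: overlap_ge0 | apply: dM].
under eq_bigr => i _ do rewrite big_split /= sum_if_eq.
rewrite big_split /= -mulr_suml sum_overlap // lerD2l.
under eq_bigr => i _ do rewrite -mulr_suml.
rewrite -mulr_suml (_ : \sum_i _ = TV P Q) //.
under eq_bigr => i _ do rewrite -mulr_suml -mulr_sumr sum_sub_overlap_r //.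
under eq_bigr => i _ do rewrite sub_overlap_TVK //.
exact: sum_sub_overlap.
Qed.

Lemma W1_le_cost P Q d L : coupling P Q L -> (forall i j, 0 <= d i j) ->
  W1 P Q d <= transport_cost L d.
Proof.
move=> hL d0; apply: ge_inf; last by exists L.
exists 0 => _ [L' [[L'0 _ _] ->]].
by apply: sumr_ge0 => i _; apply: sumr_ge0 => j _; apply: mulr_ge0.
Qed.

Lemma W1_le_overlap P Q d M B : is_distr P -> is_distr Q ->
  (forall i j, 0 <= d i j) -> (forall i, d i i <= M) -> (forall i j, d i j <= B) ->
  W1 P Q d <= (1 - TV P Q) * M + TV P Q * B.
Proof.
move=> hP hQ d0 dM dB; apply: le_trans (maximal_coupling_cost hP hQ dM dB).
exact: W1_le_cost (coupling_maximal_coupling hP hQ) d0.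
Qed.

Lemma W1_le_bound P Q d B : is_distr P -> is_distr Q ->
  (forall i j, 0 <= d i j) -> (forall i j, d i j <= B) -> W1 P Q d <= B.
Proof.
move=> hP hQ d0 dB; have := W1_le_overlap hP hQ d0 (fun i => dB i i) dB.
by rewrite mulrBl mul1r subrK.
Qed.

Lemma le_W1 P Q d d' : is_distr P -> is_distr Q ->
  (forall i j, 0 <= d i j) -> (forall i j, d i j <= d' i j) -> W1 P Q d <= W1 P Q d'.
Proof.
move=> hP hQ d0 dd'; apply: lb_le_inf.
  by exists (transport_cost (maximal_coupling P Q) d'), (maximal_coupling P Q);
    split=> //; apply: coupling_maximal_coupling.
move=> _ [L [hL ->]]; apply: le_trans (W1_le_cost hL d0) _.
apply: ler_sum => i _; apply: ler_sum => j _; apply: ler_wpM2l => //.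
by case: hL.
Qed.

End MaximalCoupling.

Section BisimulationMetric.
Variables (R : realType) (S A : finType).
Variables (Pr Pr' : S -> A -> S -> R) (Rw Rw' : S -> A -> R) (gamma : R).
Hypotheses (gamma_gt0 : 0 < gamma) (gamma_lt1 : gamma < 1).
Hypotheses (hP : forall s a, is_distr (Pr s a)) (hP' : forall s a, is_distr (Pr' s a)).

Definition bisim_step (d : S -> S -> R) s t := \big[Num.max/0]_a
  (`|Rw s a - Rw' t a| + gamma * W1 (Pr s a) (Pr' t a) d).

Local Notation d := (dn Pr Pr' Rw Rw' gamma).
Local Notation B := (Rmax Rw Rw' / (1 - gamma)).
Local Notation D := (\big[Num.max/0]_s dTV Pr Pr' Rw Rw' gamma s).
Local Notation M := ((1 - gamma)^-1 * D).

Lemma dnS n : d n.+1 = bisim_step (d n).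
Proof. by []. Qed.

Lemma one_sub_gamma_gt0 : 0 < 1 - gamma.
Proof. by rewrite subr_gt0. Qed.

Lemma reward_gap_le_Rmax s t a : `|Rw s a - Rw' t a| <= Rmax Rw Rw'.
Proof.
apply: le_trans (le_bigmax _ _ s); apply: le_trans (le_bigmax _ _ t).
exact: (le_bigmax _ (fun a => `|Rw s a - Rw' t a|)).
Qed.

Lemma dTV_le_max s a :
  `|Rw s a - Rw' s a| + gamma * Rmax Rw Rw' / (1 - gamma) * TV (Pr s a) (Pr' s a) <= D.
Proof.
apply: le_trans (le_bigmax _ _ s).
exact: (le_bigmax _ (fun a => `|Rw s a - Rw' s a|
  + gamma * Rmax Rw Rw' / (1 - gamma) * TV (Pr s a) (Pr' s a))).
Qed.

Lemma bound_ge0 : 0 <= B.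
Proof. by apply: divr_ge0 (ltW one_sub_gamma_gt0); apply: bigmax_ge_id. Qed.

Lemma diag_bound_ge0 : 0 <= M.
Proof. by apply: mulr_ge0; [rewrite invr_ge0 ltW ?one_sub_gamma_gt0 | apply: bigmax_ge_id]. Qed.

Lemma bisim_step_ge0 d s t : 0 <= bisim_step d s t.
Proof. exact: bigmax_ge_id. Qed.

Lemma bisim_step_le_bound d : (forall s t, 0 <= d s t) -> (forall s t, d s t <= B) ->
  forall s t, bisim_step d s t <= B.
Proof.
move=> d0 dB s t; apply: bigmax_le bound_ge0 _ => a _.
have -> : B = Rmax Rw Rw' + gamma * B.
  by field; rewrite lt0r_neq0 ?one_sub_gamma_gt0.
apply: lerD (reward_gap_le_Rmax _ _ _) _.
by apply: ler_wpM2l; [exact: ltW | exact: W1_le_bound].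
Qed.

Lemma le_bisim_step d d' : (forall s t, 0 <= d s t) -> (forall s t, d s t <= d' s t) ->
  forall s t, bisim_step d s t <= bisim_step d' s t.
Proof.
move=> d0 dd' s t; apply: bigmax_le (bisim_step_ge0 _ _ _) _ => a _.
apply: le_trans (le_bigmax _ _ a); apply: lerD => //.
by apply: ler_wpM2l; [exact: ltW | exact: le_W1].
Qed.

Lemma bisim_step_diag d : (forall s t, 0 <= d s t) -> (forall s t, d s t <= B) ->
  (forall s, d s s <= M) -> forall s, bisim_step d s s <= M.
Proof.
move=> d0 dB dM s; apply: bigmax_le diag_bound_ge0 _ => a _.
set T := TV (Pr s a) (Pr' s a); set r := `|Rw s a - Rw' s a|.
have M_fix : M = D + gamma * M.
  by field; rewrite lt0r_neq0 ?one_sub_gamma_gt0.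
apply: le_trans (_ : r + gamma * ((1 - T) * M + T * B) <= _).
  by rewrite lerD2l ler_wpM2l ?(ltW gamma_gt0) //; apply: W1_le_overlap.
have -> : r + gamma * ((1 - T) * M + T * B)
    = r + gamma * Rmax Rw Rw' / (1 - gamma) * T + gamma * M - gamma * (T * M).
  by rewrite /r; ring.
rewrite [X in _ <= X]M_fix lerBlDr -[X in _ <= X]addrA lerD ?dTV_le_max // lerDl.
by apply: mulr_ge0 (ltW gamma_gt0) (mulr_ge0 (TV_ge0 _ _) diag_bound_ge0).
Qed.

Lemma dn_bounds n s t : 0 <= d n s t <= B.
Proof.
elim: n s t => [|n IH] s t; first by rewrite lexx bound_ge0.
rewrite dnS bisim_step_ge0 bisim_step_le_bound // => {}s {}t.
all: by case/andP: (IH s t).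
Qed.

Lemma dn_ge0 n s t : 0 <= d n s t.
Proof. by case/andP: (dn_bounds n s t). Qed.

Lemma dn_le_bound n s t : d n s t <= B.
Proof. by case/andP: (dn_bounds n s t). Qed.

Lemma dn_nondecreasing s t : nondecreasing_seq (fun n => d n s t).
Proof.
apply/nondecreasing_seqP => n; elim: n s t => [|n IH] s t; first exact: bisim_step_ge0.
by rewrite [d n.+2]dnS; apply: le_bisim_step; [apply: dn_ge0 | apply: IH].
Qed.

Lemma dn_diag_le n s : d n s s <= M.
Proof.
elim: n s => [|n IH] s; first exact: diag_bound_ge0.
by apply: bisim_step_diag => //; [apply: dn_ge0 | apply: dn_le_bound].
Qed.

Lemma dbar_diag_le s : dbar Pr Pr' Rw Rw' gamma s s <= M.
Proof.
apply: limr_le; last by apply: nearW => n; apply: dn_diag_le.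
apply: nondecreasing_is_cvgn (dn_nondecreasing s s) _.
by exists B => _ [n _ <-]; apply: dn_le_bound.
Qed.

End BisimulationMetric.

Theorem lemma5 (R : realType) (S A : finType)
  (Pr Pr' : S -> A -> S -> R) (Rw Rw' : S -> A -> R) (gamma : R)
  (hg0 : 0 < gamma) (hg1 : gamma < 1)
  (hP : forall s a, is_distr (Pr s a))
  (hP' : forall s a, is_distr (Pr' s a)) :
  \big[Num.max/0]_(i : S) dbar Pr Pr' Rw Rw' gamma i i
  <= (1 - gamma)^-1 * \big[Num.max/0]_(i : S) dTV Pr Pr' Rw Rw' gamma i.
Proof.
apply: bigmax_le => [|s _]; first exact: diag_bound_ge0.
exact: dbar_diag_le.
Qed.
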